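(* There exists a $5$-ary $2$-frameproof code of length $4$ and cardinality $32$ satisfying Property $P(2)$.
   Context: For $P\subseteq F^l$ over a finite alphabet $F$, $desc(P)=\{x\in F^l: \text{for every } i \text{ there is } y\in P \text{ with } x_i=y_i\}$. For an integer $c\geq 2$, a $c$-frameproof code is a subset $C\subseteq F^l$ with $desc(P)\cap C=P$ for every $P\subseteq C$ with $|P|\leq c$; it is $q$-ary if $|F|=q$. A $c$-frameproof code $C$ over an alphabet $S$ satisfies Property $P(t)$ if there is a special element $\infty\in S$ such that every codeword has at most $t-1$ coordinates equal to $\infty$ and any two codewords that agree in $t$ coordinates where their common value is not $\infty$ are equal. *)

From mathcomp Require Import all_boot.
Set Implicit Arguments. Unset Strict Implicit. Unset Printing Implicit Defensive.

Definition word (F : finType) (l : nat) := {ffun 'I_l -> F}.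

Definition desc (F : finType) (l : nat) (P : {set word F l}) : {set word F l} :=
  [set x : word F l | [forall i : 'I_l, [exists y in P, x i == y i]]].

Definition frameproof (F : finType) (l c : nat) (C : {set word F l}) : Prop :=
  forall P : {set word F l}, P \subset C -> #|P| <= c -> desc P :&: C = P.

Definition propertyP (F : finType) (l t : nat) (C : {set word F l}) : Prop :=
  exists inf : F,
    (forall x, x \in C -> #|[set i : 'I_l | x i == inf]| <= t - 1) /\
    (forall x y, x \in C -> y \in C ->
       t <= #|[set i : 'I_l | (x i == y i) && (x i != inf)]| -> x = y).

From mathcomp Require Import all_boot zify.

Set Implicit Arguments.
Unset Strict Implicit.
Unset Printing Implicit Defensive.

(* Suppose a codeword x lies in desc(P) for a set P of at most c other codewords.
   Each of the at least l - (t - 1) coordinates where x is not the special symbol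
   agrees with some member of P, and by Property P(t) each member of P accounts for
   at most t - 1 of them; hence l - (t - 1) <= c (t - 1).  So Property P(t) forces
   the c-frameproof property as soon as (c + 1)(t - 1) < l, which holds for c = t = 2
   and l = 4.  It remains to exhibit 32 words of length 4 over 5 letters with
   Property P(2), which is checked by computation. *)

Lemma card_bigcup_le (I T : finType) (P : {pred I}) (A : I -> {set T}) :
  #|\bigcup_(i in P) A i| <= \sum_(i in P) #|A i|.
Proof.
apply: (big_ind2 (fun (B : {set T}) n => #|B| <= n)) => //; first by rewrite cards0.
by move=> B1 n1 B2 n2 le1 le2; rewrite (leq_trans (leq_card_setU B1 B2)) ?leq_add.
Qed.

Lemma frameproof_of_propertyP (F : finType) (l c t : nat) (C : {set word F l}) :
  c.+1 * (t - 1) < l -> propertyP t C -> frameproof c C.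
Proof.
move=> lt_l [inf [few_inf agree_eq]] P sPC cardP.
apply/setP => x; rewrite in_setI.
have [xP | xNP] := boolP (x \in P).
  rewrite (subsetP sPC) // andbT inE.
  by apply/forallP => i; apply/existsP; exists x; rewrite xP eqxx.
apply/negbTE/negP => /andP[xD xC].
pose S := [set i | x i != inf].
pose agreeS (y : word F l) := [set i | (x i == y i) && (x i != inf)].
have S_cover : S \subset \bigcup_(y in P) agreeS y.
  apply/subsetP => i; rewrite inE => xi_inf.
  move: xD; rewrite inE => /forallP/(_ i)/existsP[y /andP[yP /eqP xyi]].
  by apply/bigcupP; exists y; rewrite // inE xyi eqxx -xyi.
have agreeS_small y : y \in P -> #|agreeS y| <= t - 1.
  move=> yP; have : ~~ (t <= #|agreeS y|).
    by apply: contra xNP => /(agree_eq x y xC (subsetP sPC y yP)) ->.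
  by rewrite -ltnNge; lia.
have S_large : l - (t - 1) <= #|S|.
  have := cardsC [set i | x i == inf]; rewrite card_ord.
  have -> : ~: [set i | x i == inf] = S by apply/setP => i; rewrite !inE.
  by move=> sum_l; rewrite -[X in X - _]sum_l leq_subLR leq_add2r few_inf.
have S_small : #|S| <= c * (t - 1).
  rewrite (leq_trans (subset_leq_card S_cover)) // (leq_trans (card_bigcup_le _ _)) //.
  rewrite (leq_trans (leq_sum _ agreeS_small)) // sum_nat_const leq_mul2r.
  by rewrite cardP orbT.
by move: lt_l; lia.
Qed.

Lemma card_ord_set n (p : pred nat) : #|[set i : 'I_n | p i]| = count p (iota 0 n).
Proof. by rewrite cardsE cardE /enum_mem size_filter -val_enum_ord count_map enumT. Qed.

Definition of_digits n l (s : seq nat) : word 'I_n.+1 l :=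
  [ffun i : 'I_l => inord (nth 0 s i)].

Lemma of_digitsE n l s (i : 'I_l) :
  all (fun d => d <= n) s -> of_digits n l s i = nth 0 s i :> nat.
Proof.
move=> s_digits; rewrite ffunE inordK // ltnS.
have [lt_i_s | le_s_i] := ltnP i (size s); first exact/(allP s_digits)/mem_nth.
by rewrite nth_default.
Qed.

Lemma of_digits_inj n l : {in [pred s | (size s == l) && all (fun d => d <= n) s] &,
  injective (of_digits n l)}.
Proof.
move=> s r /andP[/eqP size_s s_digits] /andP[/eqP size_r r_digits] eq_sr.
apply: (@eq_from_nth _ 0); first by rewrite size_s size_r.
move=> k; rewrite size_s => lt_k_l.
by rewrite -(of_digitsE (Ordinal lt_k_l) s_digits) eq_sr of_digitsE.
Qed.

(* The letter 4 plays the role of the special symbol. *)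
Definition code_digits : seq (seq nat) :=
  [:: [::0;0;0;4]; [::0;1;4;0]; [::0;2;1;4]; [::0;3;4;1]; [::0;4;2;2]; [::0;4;3;3];
      [::1;1;2;4]; [::2;1;3;4]; [::3;1;4;1]; [::4;1;0;2]; [::4;1;1;3]; [::1;4;0;1];
      [::2;4;1;1]; [::4;0;2;1]; [::4;2;3;1]; [::1;2;4;2]; [::1;0;4;3]; [::2;0;4;2];
      [::1;3;1;4]; [::1;4;3;0]; [::3;0;3;4]; [::4;0;1;0]; [::3;4;1;2]; [::4;3;3;2];
      [::2;2;0;4]; [::2;3;4;0]; [::2;4;2;3]; [::3;3;2;4]; [::4;2;2;0]; [::3;2;4;3];
      [::3;4;0;0]; [::4;3;0;3]].

Definition code : {set word 'I_5 4} := [set x in map (of_digits 4 4) code_digits].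

Lemma code_digits_wf :
  all (fun s => (size s == 4) && all (fun d => d <= 4) s) code_digits.
Proof. by []. Qed.

Lemma code_digits_uniq : uniq code_digits.
Proof. by []. Qed.

Lemma code_digits_few_4 :
  all (fun s => count (fun k => nth 0 s k == 4) (iota 0 4) <= 1) code_digits.
Proof. by []. Qed.

Lemma code_digits_agree :
  all (fun s => all (fun r =>
    (2 <= count (fun k => (nth 0 s k == nth 0 r k) && (nth 0 s k != 4)) (iota 0 4))
    ==> (s == r)) code_digits) code_digits.
Proof. by vm_compute. Qed.

Lemma card_code : #|code| = 32.
Proof.
rewrite cardsE (card_uniqP _) ?size_map // map_inj_in_uniq ?code_digits_uniq //.
by apply: sub_in2 (@of_digits_inj 4 4) => s /(allP code_digits_wf).
Qed.

Lemma mem_codeP x :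
  reflect (exists2 s, s \in code_digits & x = of_digits 4 4 s) (x \in code).
Proof. by rewrite inE; apply: mapP. Qed.

Lemma code_propertyP : propertyP 2 code.
Proof.
have digitsE s (i : 'I_4) : s \in code_digits -> of_digits 4 4 s i = nth 0 s i :> nat.
  by move=> /(allP code_digits_wf)/andP[_]; apply: of_digitsE.
exists (inord 4); split.
- move=> _ /mem_codeP[s s_code ->].
  have -> : [set i | of_digits 4 4 s i == inord 4] = [set i : 'I_4 | nth 0 s i == 4].
    by apply/setP => i; rewrite !inE -val_eqE /= digitsE // inordK.
  by rewrite (card_ord_set 4 (fun k => nth 0 s k == 4)); apply: (allP code_digits_few_4).
- move=> _ _ /mem_codeP[s s_code ->] /mem_codeP[r r_code ->].
  have -> : [set i | (of_digits 4 4 s i == of_digits 4 4 r i) &&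
                     (of_digits 4 4 s i != inord 4)] =
            [set i : 'I_4 | (nth 0 s i == nth 0 r i) && (nth 0 s i != 4)].
    by apply/setP => i; rewrite !inE -!val_eqE /= !digitsE // inordK.
  rewrite (card_ord_set 4 (fun k => (nth 0 s k == nth 0 r k) && (nth 0 s k != 4))).
  move=> agree2.
  by have /implyP/(_ agree2)/eqP-> := allP (allP code_digits_agree s s_code) r r_code.
Qed.

Theorem lemma3 :
  exists C : {set word 'I_5 4},
    #|C| = 32 /\ frameproof 2 C /\ propertyP 2 C.
Proof.
exists code; split; first exact: card_code.
split; last exact: code_propertyP.
by apply: frameproof_of_propertyP code_propertyP.
Qed.
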